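(* Let $k\geq2$ be an integer, let $\mathcal{S}\subseteq\mathbb{A}$ be a ring (where $\mathbb{A}$ is the set of real algebraic numbers), let $F_0,\dots,F_{k-1}$ be square matrices over $\mathcal{S}$ all of the same dimension with $F_0$ the zero matrix, and set $F(n)=F_{n_0}\cdots F_{n_{s-1}}$ for $(n)_k=n_{s-1}\cdots n_0$. Then for every real $\rho'>0$, the joint spectral radius $\rho$ of $\{F_1,\dots,F_{k-1}\}$ satisfies $\rho\leq\rho'$ iff for every $\varepsilon>0$ we have $F(n)\in O\bigl(n^{\log_k\rho'+\varepsilon}\bigr)$ as $n\to\infty$.
   Context: For $n\in\mathbb{N}_0$, $(n)_k=n_{s-1}\cdots n_0$ is the standard base-$k$ representation of $n$ (no leading zeros; $(0)_k$ empty). The joint spectral radius of a finite set $S$ of square matrices is $\rho(S)=\lim_{\ell\to\infty}\max\{\|A_1\cdots A_\ell\|^{1/\ell}: A_i\in S\}$ for any matrix norm. A matrix sequence $(F(n))$ is in $O(g(n))$ if there are $n_0$, $c>0$ with $\|F(n)\|\leq c\,g(n)$ for $n\geq n_0$ (equivalently, each entry sequence is in $O(g(n))$). *)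

From HB Require Import structures.
From mathcomp Require Import all_boot all_order all_algebra.
From mathcomp Require Import all_classical all_reals all_analysis.
Set Implicit Arguments. Unset Strict Implicit. Unset Printing Implicit Defensive.
Import Order.TTheory GRing.Theory Num.Theory.
Local Open Scope ring_scope.

Definition algebraic_num (R : realType) (x : R) : Prop :=
  exists p : {poly rat}, p != 0 /\ root (map_poly ratr p) x.

Definition alg_subring (R : realType) (S : pred R) : Prop :=
  [/\ 1 \in S,
      (forall x y, x \in S -> y \in S -> x - y \in S),
      (forall x y, x \in S -> y \in S -> x * y \in S) &
      (forall x, x \in S -> algebraic_num x)].

Definition mxnorm (R : realType) (d : nat) (M : 'M[R]_d) : R :=
  \sum_(i < d) \sum_(j < d) `|M i j|.

Definition mxprod (R : realType) (d : nat) (I : Type) (A : I -> 'M[R]_d)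
  (w : seq I) : 'M[R]_d := foldr (fun i M => A i *m M) 1%:M w.

Definition jsr_term (R : realType) (d m : nat) (A : 'I_m -> 'M[R]_d) (l : nat) : R :=
  \big[Order.max/0]_(w : l.-tuple 'I_m) mxnorm (mxprod A w).

Definition jsr (R : realType) (d m : nat) (A : 'I_m -> 'M[R]_d) : R :=
  limn (fun l : nat => powR (jsr_term A l) (l%:R)^-1).

(* base-k digits of n, least significant first: (n)_k = n_{s-1}...n_0 gives
   [:: n_0; ...; n_{s-1}]; (0)_k is empty. *)
Fixpoint digits_aux (k fuel n : nat) : seq nat :=
  match fuel with
  | 0 => [::]
  | f.+1 => if n == 0%N then [::] else (n %% k)%N :: digits_aux k f (n %/ k)
  end.
Definition digits (k n : nat) : seq nat := digits_aux k n n.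

Definition Fseq (R : realType) (d k : nat) (F : nat -> 'M[R]_d) (n : nat) : 'M[R]_d :=
  mxprod F (digits k n).

Definition bigO_mx (R : realType) (d : nat) (G : nat -> 'M[R]_d) (g : nat -> R) : Prop :=
  exists n0 : nat, exists2 c : R, 0 < c &
    forall n : nat, (n0 <= n)%N -> mxnorm (G n) <= c * g n.

From HB Require Import structures.
From mathcomp Require Import all_boot all_order all_algebra.
From mathcomp Require Import all_classical all_reals all_analysis.
From mathcomp Require Import zify ring lra.
Import Order.TTheory GRing.Theory Num.Theory.
Set Implicit Arguments. Unset Strict Implicit. Unset Printing Implicit Defensive.
Local Open Scope ring_scope.

(* Let T(s) be the largest norm of a product of s matrices from
   {F_1, ..., F_(k-1)}.  T is submultiplicative, so by Fekete's argument
   T(s)^(1/s) converges to its infimum, the joint spectral radius rho; hence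
   rho < r forces T(s) = O(r^s), and T(s) = O(r^s) forces rho <= r.  Since
   F_0 = 0, F(n) is either 0 or one of the products counted by T(s), s being
   the number of base-k digits of n, and every such product is some F(n) with
   k^(s-1) <= n < k^s.  On that range n^(log_k r) is r^s up to a constant
   factor, so F(n) = O(n^(log_k r)) iff T(s) = O(r^s); take r = rho' k^eps. *)

Section Digits.
Local Open Scope nat_scope.
Variable k : nat.
Hypothesis k_gt1 : 1 < k.

Lemma digits_aux_fuel f g n : n <= f -> n <= g -> digits_aux k f n = digits_aux k g n.
Proof.
elim: f g n => [|f IH] g n; first by rewrite leqn0 => /eqP->; case: g.
case: g => [|g]; first by rewrite leqn0 => _ /eqP->.
move=> n_le_f n_le_g /=; case: eqP => // /eqP n_neq0.
have lt_n : n %/ k < n by rewrite ltn_Pdiv // lt0n.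
by rewrite (IH g) // -ltnS (leq_trans lt_n).
Qed.

Lemma digitsE n : digits k n = if n == 0 then [::] else n %% k :: digits k (n %/ k).
Proof.
case: n => [|n] //; rewrite /digits /=; congr (_ :: _).
by apply: digits_aux_fuel => //; rewrite -ltnS ltn_Pdiv // ltnW.
Qed.

Lemma digits_lt n : all (fun c => c < k) (digits k n).
Proof.
elim/ltn_ind: n => n IH; rewrite digitsE; case: eqP => //= /eqP n_neq0.
by rewrite ltn_pmod ?(ltnW k_gt1) // IH // ltn_Pdiv // lt0n.
Qed.

Lemma digits_size n : 0 < n -> k ^ (size (digits k n)).-1 <= n < k ^ size (digits k n).
Proof.
elim/ltn_ind: n => n IH n_gt0; rewrite digitsE gtn_eqF //=.
have n_eq := divn_eq n k; have n_mod : n %% k < k by rewrite ltn_pmod // ltnW.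
have [q0|q_gt0] := posnP (n %/ k).
  by move: n_eq; rewrite q0 digitsE /= expn1 n_gt0 mul0n add0n => ->.
have /andP[lo hi] := IH _ (ltn_Pdiv k_gt1 n_gt0) q_gt0.
have s_gt0 : 0 < size (digits k (n %/ k)) by rewrite digitsE gtn_eqF.
move: lo hi; rewrite -(prednK s_gt0) /= !expnS.
set K := k ^ _; set q := n %/ k in n_eq *; nia.
Qed.

Definition undigits (ds : seq nat) : nat := foldr (fun c acc => c + k * acc) 0 ds.

Lemma undigitsK ds : all (fun c => 0 < c < k) ds -> digits k (undigits ds) = ds.
Proof.
elim: ds => //= c ds IH /andP[/andP[c_gt0 c_lt] ds_ok].
rewrite digitsE addn_eq0 (gtn_eqF c_gt0) /= mulnC addnC modnMDl modn_small //.
by rewrite divnMDl ?divn_small ?addn0 ?IH // ltnW.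
Qed.

End Digits.

Section MatrixProducts.
Variables (R : realType) (d : nat).

Lemma mxnorm_ge0 (M : 'M[R]_d) : 0 <= mxnorm M.
Proof. by apply: sumr_ge0 => i _; apply: sumr_ge0 => j _. Qed.

Lemma mxnorm0 : mxnorm (0 : 'M[R]_d) = 0.
Proof. by rewrite /mxnorm big1 // => i _; rewrite big1 // => j _; rewrite mxE normr0. Qed.

Lemma mxnorm_mul (M N : 'M[R]_d) : mxnorm (M *m N) <= mxnorm M * mxnorm N.
Proof.
rewrite /mxnorm mulr_suml.
apply: (@le_trans _ _ (\sum_i \sum_l `|M i l| * \sum_j `|N l j|)).
  apply: ler_sum => i _; under [X in _ <= X]eq_bigr do rewrite mulr_sumr.
  rewrite exchange_big /=; apply: ler_sum => j _; rewrite !mxE.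
  by apply: le_trans (ler_norm_sum _ _ _) _; apply: ler_sum => l _; rewrite normrM.
apply: ler_sum => i _; rewrite mulr_suml; apply: ler_sum => l _.
apply: ler_wpM2l => //; rewrite [X in _ <= X](bigD1 l) //= lerDl.
by apply: sumr_ge0 => ? _; apply: sumr_ge0.
Qed.

Lemma mxprod_cat (I : Type) (A : I -> 'M[R]_d) x y :
  mxprod A (x ++ y) = mxprod A x *m mxprod A y.
Proof. by elim: x => [|i x IH] /=; rewrite ?mul1mx // /mxprod /= -mulmxA -IH. Qed.

Variables (m : nat) (A : 'I_m -> 'M[R]_d).

Lemma jsr_term_ge0 l : 0 <= jsr_term A l.
Proof. exact: bigmax_ge_id. Qed.

Lemma jsr_term_ub l (w : seq 'I_m) : size w = l -> mxnorm (mxprod A w) <= jsr_term A l.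
Proof.
move=> /eqP size_w.
exact: (le_bigmax 0 (fun w : l.-tuple 'I_m => mxnorm (mxprod A w)) (Tuple size_w)).
Qed.

Lemma jsr_term_submul a b : jsr_term A (a + b) <= jsr_term A a * jsr_term A b.
Proof.
apply: bigmax_le => [|w _]; first by rewrite mulr_ge0 ?jsr_term_ge0.
rewrite -(cat_take_drop a w) mxprod_cat; apply: le_trans (mxnorm_mul _ _) _.
have size_take : size (take a w) = a by rewrite size_takel // size_tuple leq_addr.
have size_drop : size (drop a w) = b by rewrite size_drop size_tuple addKn.
by apply: ler_pM; rewrite ?mxnorm_ge0 ?jsr_term_ub.
Qed.

End MatrixProducts.

Section PowR.
Variable R : realType.

Lemma le_exprn_powR_invn (t r : R) n : 0 <= t -> 0 <= r -> (0 < n)%N ->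
  t `^ n%:R^-1 <= r -> t <= r ^+ n.
Proof.
move=> t_ge0 r_ge0 n_gt0 le_r.
have -> : t = (t `^ n%:R^-1) `^ n%:R by rewrite -powRrM mulVf ?pnatr_eq0 -?lt0n ?powRr1.
by rewrite -powR_mulrn // ge0_ler_powR ?ler0n ?nnegrE ?powR_ge0.
Qed.

Lemma powR_invn_le_mulr (t C r : R) n : 0 <= t -> 0 <= C -> 0 <= r -> (0 < n)%N ->
  t <= C * r ^+ n -> t `^ n%:R^-1 <= C `^ n%:R^-1 * r.
Proof.
move=> t_ge0 C_ge0 r_ge0 n_gt0 le_t.
have -> : r = (r ^+ n) `^ n%:R^-1.
  by rewrite -powR_mulrn // -powRrM mulfV ?pnatr_eq0 -?lt0n ?powRr1.
rewrite -powRM ?exprn_ge0 //.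
by apply: ge0_ler_powR; rewrite ?invr_ge0 ?ler0n ?nnegrE ?mulr_ge0 ?exprn_ge0.
Qed.

Lemma powR_invn_lt1D (C e : R) : 0 < C -> 0 < e ->
  exists N, forall n, (N <= n)%N -> C `^ n%:R^-1 < 1 + e.
Proof.
move=> C_gt0 e_gt0.
have ln1De_gt0 : 0 < ln (1 + e) by rewrite ln_gt0 // ltrDl.
have [N _ ltN] := nbhs_infty_gtr (ln C / ln (1 + e)).
exists (maxn N 1) => n; rewrite geq_max => /andP[/ltN /= ln_lt n_gt0].
have n_gt0' : 0 < n%:R :> R by rewrite ltr0n.
rewrite /powR gt_eqF // -[1 + e]lnK ?posrE ?addr_gt0 // ltr_expR.
by rewrite mulrC ltr_pdivrMr // mulrC -ltr_pdivrMr.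
Qed.

Lemma powR_lnC (x y b : R) : 0 < x -> 0 < y -> x `^ (ln y / b) = y `^ (ln x / b).
Proof. by move=> x_gt0 y_gt0; rewrite /powR !gt_eqF //; congr expR; ring. Qed.

Lemma powR_between (r t : R) j : 0 < r -> j%:R <= t <= j.+1%:R ->
  r `^ t <= Num.max 1 r * r ^+ j /\ r ^+ j.+1 <= Num.max 1 r * r `^ t.
Proof.
move=> r_gt0 /andP[jt tj]; rewrite exprS.
have rj : r `^ j%:R = r ^+ j by rewrite powR_mulrn ?ltW.
have rj1 : r `^ j.+1%:R = r * r ^+ j by rewrite powR_mulrn ?exprS ?ltW.
have [r_ge1|r_lt1] := leP 1 r.
- split; first by rewrite -rj1; apply: ler_powR.
  by rewrite ler_pM2l // -rj; apply: ler_powR.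
- have r01 : 0 < r <= 1 by rewrite r_gt0 ltW.
  rewrite !mul1r; split; first by rewrite -rj; apply: ger_powR.
  by rewrite -rj1; apply: ger_powR.
Qed.

End PowR.

Definition seq_root (R : realType) (u : nat -> R) (s : nat) := u s `^ s%:R^-1.

Definition geom_dominated (R : realType) (u : nat -> R) (r : R) : Prop :=
  exists N : nat, exists2 C : R, 0 < C & forall s, (N <= s)%N -> u s <= C * r ^+ s.

Section SubmultiplicativeSequence.
Local Open Scope classical_set_scope.
Variables (R : realType) (u : nat -> R).
Hypothesis u_ge0 : forall s, 0 <= u s.

Lemma geom_dominated_seq_root_lt r e : 0 < r -> 0 < e -> geom_dominated u r ->
  exists N, forall s, (N <= s)%N -> seq_root u s < r + e.
Proof.
move=> r_gt0 e_gt0 [N [C C_gt0 le_uC]].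
have [M ltM] := powR_invn_lt1D C_gt0 (divr_gt0 e_gt0 r_gt0).
exists (maxn 1 (maxn N M)) => s.
rewrite !geq_max => /and3P[s_gt0 /le_uC le_us /ltM lt_C].
apply: le_lt_trans (powR_invn_le_mulr (u_ge0 s) (ltW C_gt0) (ltW r_gt0) s_gt0 le_us) _.
have -> : r + e = (1 + e / r) * r by rewrite mulrDl mul1r divfK ?gt_eqF.
by rewrite ltr_pM2r.
Qed.

Hypothesis u_submul : forall a b, u (a + b) <= u a * u b.

Lemma submul_geom_dominated r L : 0 < r -> (0 < L)%N -> u L <= r ^+ L ->
  geom_dominated u r.
Proof.
move=> r_gt0 L_gt0 le_uL.
have rX_ge0 j : 0 <= r ^+ j by rewrite exprn_ge0 ?ltW.
pose C := \sum_(j < L) u j / r ^+ j.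
have le_uC s : u s <= C * r ^+ s.
  elim/ltn_ind: s => s IH; have [s_lt_L|L_le_s] := ltnP s L.
    rewrite -[u s](divfK (expf_neq0 s (lt0r_neq0 r_gt0))) ler_wpM2r //.
    rewrite /C (bigD1 (Ordinal s_lt_L)) //= lerDl sumr_ge0 // => j _.
    by rewrite divr_ge0.
  rewrite -(subnKC L_le_s) exprD mulrCA; apply: le_trans (u_submul _ _) _.
  by rewrite ler_pM ?u_ge0 // IH // ltn_subrL L_gt0 (leq_trans L_gt0 L_le_s).
exists 0%N, (C + 1) => [|s _].
  by rewrite ltr_wpDl // sumr_ge0 // => j _; rewrite divr_ge0.
by rewrite (le_trans (le_uC s)) // ler_wpM2r // lerDl.
Qed.

Let roots := seq_root u @` [set s | (0 < s)%N].

Lemma has_inf_roots : has_inf roots.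
Proof.
split; first by exists (seq_root u 1), 1%N.
by exists 0 => _ [s _ <-]; exact: powR_ge0.
Qed.

Lemma inf_roots_le s : (0 < s)%N -> inf roots <= seq_root u s.
Proof. by move=> s_gt0; apply: (ge_inf (proj2 has_inf_roots)); exists s. Qed.

Lemma inf_roots_ge0 : 0 <= inf roots.
Proof.
apply: lb_le_inf (proj1 has_inf_roots) _.
by move=> _ [s _ <-]; exact: powR_ge0.
Qed.

Lemma inf_roots_lt_geom_dominated r : inf roots < r -> geom_dominated u r.
Proof.
move=> inf_lt; have r_gt0 : 0 < r := le_lt_trans inf_roots_ge0 inf_lt.
have gap : 0 < r - inf roots by rewrite subr_gt0.
have [_ [L L_gt0 <-]] := inf_adherent gap has_inf_roots.
rewrite addrC subrK => /ltW rootL_le.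
apply: (submul_geom_dominated r_gt0 L_gt0).
exact: le_exprn_powR_invn _ (ltW r_gt0) L_gt0 rootL_le.
Qed.

Lemma seq_root_cvg : seq_root u @ \oo --> inf roots.
Proof.
apply/cvgrPdist_lt => e e_gt0; have e2_gt0 : 0 < e / 2 by rewrite divr_gt0.
have r_gt0 : 0 < inf roots + e / 2 by rewrite ltr_wpDl ?inf_roots_ge0.
have geom : geom_dominated u (inf roots + e / 2).
  by apply: inf_roots_lt_geom_dominated; rewrite ltrDl.
have [N ltN] := geom_dominated_seq_root_lt r_gt0 e2_gt0 geom.
exists (maxn 1 N) => // s /=; rewrite geq_max => /andP[s_gt0 /ltN lt_s].
rewrite distrC ger0_norm ?subr_ge0 ?inf_roots_le //; lra.
Qed.

Lemma limn_seq_root : limn (seq_root u) = inf roots.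
Proof. by apply: norm_cvg_lim; exact: seq_root_cvg. Qed.

Lemma limn_seq_root_lt_geom_dominated r : limn (seq_root u) < r -> geom_dominated u r.
Proof. by rewrite limn_seq_root; exact: inf_roots_lt_geom_dominated. Qed.

Lemma geom_dominated_limn_seq_root_le r : 0 < r -> geom_dominated u r ->
  limn (seq_root u) <= r.
Proof.
move=> r_gt0 geom; rewrite limn_seq_root; apply/ler_addgt0Pr => e e_gt0.
have [N ltN] := geom_dominated_seq_root_lt r_gt0 e_gt0 geom.
apply: le_trans (ltW (ltN (maxn 1 N) (leq_maxr _ _))).
by rewrite inf_roots_le // leq_maxl.
Qed.

End SubmultiplicativeSequence.

Section JointSpectralRadius.
Variables (R : realType) (d m : nat) (A : 'I_m -> 'M[R]_d).

Lemma jsr_lt_geom_dominated r : jsr A < r -> geom_dominated (jsr_term A) r.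
Proof.
by apply: limn_seq_root_lt_geom_dominated; [exact: jsr_term_ge0 | exact: jsr_term_submul].
Qed.

Lemma geom_dominated_jsr_le r : 0 < r -> geom_dominated (jsr_term A) r -> jsr A <= r.
Proof.
by apply: geom_dominated_limn_seq_root_le; [exact: jsr_term_ge0 | exact: jsr_term_submul].
Qed.

End JointSpectralRadius.

Section DigitProducts.
Variables (R : realType) (d k : nat) (F : nat -> 'M[R]_d).
Hypotheses (k_gt1 : (1 < k)%N) (F0 : F 0%N = 0).
Let A (i : 'I_k.-1) := F i.+1.

Lemma mxprod_map_succ (w : seq 'I_k.-1) :
  mxprod F [seq i.+1 | i : 'I_k.-1 <- w] = mxprod A w.
Proof. by rewrite /mxprod; elim: w => //= i w ->. Qed.

Lemma mxprod_mem0 ds : 0%N \in ds -> mxprod F ds = 0.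
Proof.
rewrite /mxprod; elim: ds => //= c ds IH; rewrite in_cons.
by case/predU1P => [<-|/IH ->]; rewrite ?F0 ?mul0mx ?mulmx0.
Qed.

Lemma map_succ_ord_onto ds : all (fun c => 0 < c < k)%N ds ->
  exists w : seq 'I_k.-1, [seq i.+1 | i : 'I_k.-1 <- w] = ds.
Proof.
elim: ds => [|c ds IH] /=; first by exists [::].
case/andP=> /andP[c_gt0 c_lt] /IH[w <-].
have c_pred : (c.-1 < k.-1)%N by rewrite -ltnS !prednK // (leq_trans c_gt0 (ltnW c_lt)).
by exists (Ordinal c_pred :: w); rewrite /= prednK.
Qed.

Lemma undigits_succK (w : seq 'I_k.-1) :
  digits k (undigits k [seq i.+1 | i : 'I_k.-1 <- w]) = [seq i.+1 | i : 'I_k.-1 <- w].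
Proof.
apply: undigitsK => //; rewrite all_map; apply/allP => i _ /=.
by rewrite -ltn_predRL ltn_ord.
Qed.

Lemma norm_Fseq_le n : mxnorm (Fseq k F n) <= jsr_term A (size (digits k n)).
Proof.
rewrite /Fseq; have [has0|no0] := boolP (0%N \in digits k n).
  by rewrite mxprod_mem0 // mxnorm0 jsr_term_ge0.
have digits_pos : all (fun c => 0 < c < k)%N (digits k n).
  apply/allP => c c_in; rewrite (allP (digits_lt k_gt1 n) _ c_in) andbT lt0n.
  by apply: contraNneq no0 => <-.
have [w <-] := map_succ_ord_onto digits_pos.
by rewrite mxprod_map_succ; apply: jsr_term_ub; rewrite size_map.
Qed.

Lemma powR_log_digits (r : R) n : 0 < r -> (0 < n)%N ->
  n%:R `^ (ln r / ln k%:R) <= Num.max 1 r * r ^+ (size (digits k n)).-1 /\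
  r ^+ size (digits k n) <= Num.max 1 r * n%:R `^ (ln r / ln k%:R).
Proof.
move=> r_gt0 n_gt0; have := digits_size k_gt1 n_gt0.
have : (0 < size (digits k n))%N by rewrite (digitsE k_gt1) gtn_eqF.
case: (size _) => //= j _ /andP[lo hi].
have lnk_gt0 : 0 < ln (k%:R : R) by rewrite ln_gt0 // ltr1n.
have ln_pow i : ln ((k ^ i)%:R : R) = i%:R * ln k%:R.
  by rewrite natrX lnXn ?ltr0n 1?ltnW // mulr_natl.
have k_pos i : ((k ^ i)%:R : R) \is Num.pos by rewrite posrE ltr0n expn_gt0 ltnW.
rewrite powR_lnC ?ltr0n //; apply: powR_between => //.
rewrite ler_pdivlMr // ler_pdivrMr // -!ln_pow !ler_ln ?k_pos ?posrE ?ltr0n //.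
by rewrite !ler_nat lo ltnW.
Qed.

Lemma geom_dominated_Fseq_bigO r : 0 < r -> geom_dominated (jsr_term A) r ->
  bigO_mx (Fseq k F) (fun n => n%:R `^ (ln r / ln k%:R)).
Proof.
move=> r_gt0 [N [C C_gt0 le_C]].
exists (k ^ N)%N, (C * Num.max 1 r); first by rewrite mulr_gt0 // lt_max ltr01.
move=> n le_n; have n_gt0 : (0 < n)%N by apply: leq_trans le_n; rewrite expn_gt0 ltnW.
have [_ le_r] := powR_log_digits r_gt0 n_gt0.
have N_le : (N <= size (digits k n))%N.
  have /andP[_ hi] := digits_size k_gt1 n_gt0.
  by apply/ltnW/(ltn_pexp2l (ltnW k_gt1)); apply: leq_ltn_trans hi.
apply: le_trans (norm_Fseq_le n) _; apply: le_trans (le_C _ N_le) _.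
by rewrite -mulrA ler_wpM2l // ltW.
Qed.

Lemma Fseq_bigO_geom_dominated r : 0 < r ->
  bigO_mx (Fseq k F) (fun n => n%:R `^ (ln r / ln k%:R)) ->
  geom_dominated (jsr_term A) r.
Proof.
move=> r_gt0 [n0 [c c_gt0 le_c]].
have M_gt0 : 0 < c * Num.max 1 r by rewrite mulr_gt0 // lt_max ltr01.
exists n0.+1, (c * Num.max 1 r / r) => [|s n0_lt_s]; first by rewrite divr_gt0.
apply: bigmax_le => [|w _]; first by rewrite mulr_ge0 ?exprn_ge0 ?divr_ge0 ?ltW.
set n := undigits k [seq i.+1 | i : 'I_k.-1 <- tval w].
have digits_n : digits k n = [seq i.+1 | i : 'I_k.-1 <- tval w] := undigits_succK w.
have size_n : size (digits k n) = s by rewrite digits_n size_map size_tuple.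
have s_gt0 : (0 < s)%N by apply: leq_ltn_trans n0_lt_s.
have n_gt0 : (0 < n)%N.
  rewrite lt0n; apply: contraTneq s_gt0 => n_eq0.
  by rewrite -size_n n_eq0 (digitsE k_gt1).
have /andP[lo _] := digits_size k_gt1 n_gt0; rewrite size_n in lo.
have n0_le_n : (n0 <= n)%N by have := ltn_expl s.-1 k_gt1; lia.
have -> : mxprod A w = Fseq k F n by rewrite /Fseq digits_n mxprod_map_succ.
apply: le_trans (le_c n n0_le_n) _.
have [le_r _] := powR_log_digits r_gt0 n_gt0; rewrite size_n in le_r.
rewrite -(prednK s_gt0) exprS mulrA divfK ?gt_eqF // -mulrA.
by rewrite ler_wpM2l // ltW.
Qed.

End DigitProducts.

Theorem corollary3p12 (R : realType) (k d : nat) (S : pred R)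
  (F : nat -> 'M[R]_d) :
  (2 <= k)%N ->
  alg_subring S ->
  (forall i, (i < k)%N -> forall a b, F i a b \in S) ->
  F 0%N = 0 ->
  forall rho' : R, 0 < rho' ->
    (jsr (fun i : 'I_k.-1 => F i.+1) <= rho' <->
     forall eps : R, 0 < eps ->
       bigO_mx (Fseq k F)
         (fun n => powR (n%:R) (ln rho' / ln (k%:R) + eps))).
Proof.
move=> k_gt1 _ _ F0 rho' rho'_gt0.
have lnk_gt0 : 0 < ln (k%:R : R) by rewrite ln_gt0 // ltr1n.
split=> [jsr_le eps eps_gt0 | bigO].
- pose r := expR (ln rho' + eps * ln k%:R).
  have -> : ln rho' / ln k%:R + eps = ln r / ln k%:R.
    by rewrite expRK mulrDl mulfK ?gt_eqF.
  apply: geom_dominated_Fseq_bigO => //; first exact: expR_gt0.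
  apply: jsr_lt_geom_dominated; apply: le_lt_trans jsr_le _.
  by rewrite -[X in X < _]lnK ?posrE // ltr_expR ltrDl mulr_gt0.
- apply/ler_addgt0Pr => e e_gt0; have r_gt0 : 0 < rho' + e by rewrite addr_gt0.
  have eps_gt0 : 0 < ln (rho' + e) / ln k%:R - ln rho' / ln k%:R.
    by rewrite subr_gt0 ltr_pM2r ?invr_gt0 // ltr_ln ?posrE // ltrDl.
  have := bigO _ eps_gt0; rewrite addrC subrK.
  by move/(Fseq_bigO_geom_dominated k_gt1 r_gt0)/geom_dominated_jsr_le; apply.
Qed.
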